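(* For $T\in\mathcal C(\rho)$ let $\psi_T\colon G\times Y\times Y\to\mathbb C$ be $\psi_T(u,v,y)=(TK_{0,y})(u,v)$. Then for every $T\in\mathcal C(\rho)$, $u\in G$ and $v,y\in Y$, \[ \psi_{T^*}(u,v,y)=\overline{(TK_{0,v})(-u,y)}=\overline{\psi_T(-u,y,v)}. \]
   Context: Let $G$ be a locally compact abelian group (written additively) with Haar measure $\nu$, and $(Y,\lambda)$ a measure space. Let $H$ be a reproducing kernel Hilbert space of complex functions on $G\times Y$ whose inner product is that of $L^2(G\times Y,\nu\otimes\lambda)$, with reproducing kernel $(K_{x,y})_{(x,y)\in G\times Y}$ (so $f(x,y)=\langle f,K_{x,y}\rangle$). Assume $K_{x,y}(u,v)=K_{0,y}(u-x,v)$ for all $u,x\in G$, $v,y\in Y$. For $a\in G$ let $(\rho(a)f)(x,y)=f(x-a,y)$ and $\mathcal C(\rho)=\{S\in\mathcal B(H): S\rho(a)=\rho(a)S\ \forall a\in G\}$. (In the paper, $\psi_T$ is denoted $\Theta^{-1}T$, the inverse of the bijection $\psi\mapsto S_\psi$.) *)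

From HB Require Import structures.
From mathcomp Require Import all_boot all_order all_algebra.
From mathcomp Require Import all_classical all_reals all_analysis.
From mathcomp Require Import complex.

Set Implicit Arguments.
Unset Strict Implicit.
Unset Printing Implicit Defensive.

Import Order.TTheory GRing.Theory Num.Theory.
Import numFieldNormedType.Exports.

Local Open Scope classical_set_scope.
Local Open Scope ring_scope.

Definition ptG (G : topologicalZmodType) : Type := G.
HB.instance Definition _ (G : topologicalZmodType) := Topological.on (ptG G).
HB.instance Definition _ (G : topologicalZmodType) := isPointed.Build (ptG G) 0.
Notation borelG G := (g_sigma_algebraType (@open (ptG G))) (only parsing).

Section Setting.
Context (R : realType) (G : topologicalZmodType).

Definition haar_measure (nu : {measure set borelG G -> \bar R}) : Prop :=
  [/\ (forall (a : G) (A : set (borelG G)), measurable A ->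
          nu ((fun x : G => a + x) @` A) = nu A),
      (forall K : set G, compact K -> (nu K < +oo)%E),
      (forall U : set G, open U -> U !=set0 -> (0 < nu U)%E),
      (forall A : set (borelG G), measurable A ->
          nu A = ereal_inf [set nu U | U in [set U : set G | open U /\ A `<=` U]]) &
      (forall U : set G, open U ->
          nu U = ereal_sup [set nu Kc | Kc in [set Kc : set G | compact Kc /\ Kc `<=` U]])].

Context (d : measure_display) (Y : measurableType d)
        (nu : {measure set borelG G -> \bar R}) (lam : {measure set Y -> \bar R}).

Local Notation C := (complex R).
Local Notation fT := (G * Y -> C)%type.

Definition intGY (h : G * Y -> R) : R :=
  fine (integral (nu \x lam)%E [set: borelG G * Y] (fun z : borelG G * Y => (h z)%:E)).

Definition ipL2 (f g : fT) : C :=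
  Complex (intGY (fun z => complex.Re (f z * conjc (g z))))
          (intGY (fun z => complex.Im (f z * conjc (g z)))).

Definition normL2 (f : fT) : R :=
  Num.sqrt (intGY (fun z => complex.Re (f z) ^+ 2 + complex.Im (f z) ^+ 2)).

Definition sq_integrable (f : fT) : Prop :=
  [/\ measurable_fun [set: borelG G * Y] (fun z : borelG G * Y => complex.Re (f z)),
      measurable_fun [set: borelG G * Y] (fun z : borelG G * Y => complex.Im (f z)) &
      (integral (nu \x lam)%E [set: borelG G * Y]
         (fun z : borelG G * Y => (complex.Re (f z) ^+ 2 + complex.Im (f z) ^+ 2)%:E) < +oo)%E].

(* H is a reproducing kernel Hilbert space of functions on G x Y whose
   inner product is that of L^2(G x Y), with reproducing kernel K:
   K x y = K_{x,y}. *)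
Definition is_RKHS_L2 (H : set fT) (K : G -> Y -> fT) : Prop :=
  H (fun _ => 0) /\
      (forall (c : C) (f g : fT), H f -> H g -> H (fun z => c * f z + g z)) /\
      (forall f, H f -> sq_integrable f) /\
      (forall u : nat -> fT, (forall n, H (u n)) ->
         (forall e : R, 0 < e -> exists N : nat, forall m n : nat,
             (N <= m)%N -> (N <= n)%N -> normL2 (fun z => u m z - u n z) < e) ->
         exists f, H f /\
           (forall e : R, 0 < e -> exists N : nat, forall n : nat,
              (N <= n)%N -> normL2 (fun z => u n z - f z) < e)) /\
      (forall x y, H (K x y)) /\
      (forall f x y, H f -> f (x, y) = ipL2 f (K x y)).

Definition rho (a : G) (f : fT) : fT := fun z => f (z.1 - a, z.2).

Definition bounded_op (H : set fT) (T : fT -> fT) : Prop :=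
  [/\ (forall f, H f -> H (T f)),
      (forall (c : C) f g, H f -> H g ->
         T (fun z => c * f z + g z) = (fun z => c * T f z + T g z)) &
      (exists M : R, forall f, H f -> normL2 (T f) <= M * normL2 f)].

Definition in_commutant (H : set fT) (T : fT -> fT) : Prop :=
  bounded_op H T /\ (forall a f, H f -> T (rho a f) = rho a (T f)).

Definition is_adjoint (H : set fT) (T Ts : fT -> fT) : Prop :=
  (forall g, H g -> H (Ts g)) /\
  (forall f g, H f -> H g -> ipL2 (T f) g = ipL2 f (Ts g)).

End Setting.

Definition psi (R : realType) (G : zmodType) (Y : Type)
    (K : G -> Y -> (G * Y -> complex R)) (T : (G * Y -> complex R) -> (G * Y -> complex R))
    (u : G) (v y : Y) : complex R :=
  T (K 0 y) (u, v).

From HB Require Import structures.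
From mathcomp Require Import all_boot all_order all_algebra.
From mathcomp Require Import all_classical all_reals all_analysis.
From mathcomp Require Import complex.
From mathcomp Require Import lra.
Set Implicit Arguments.
Unset Strict Implicit.
Unset Printing Implicit Defensive.

Import Order.TTheory GRing.Theory Num.Theory.
Local Open Scope classical_set_scope.
Local Open Scope ring_scope.

(* Writing <.,.> for the L^2 inner product, the reproducing property and the
   adjoint identity give
     (T^* K_{0,y})(u,v) = <T^* K_{0,y}, K_{u,v}> = conj <T K_{u,v}, K_{0,y}>
                        = conj (T K_{u,v})(0,y),
   and K_{u,v} = rho(u) K_{0,v} with T commuting with rho(u) turns the last
   value into conj (T K_{0,v})(-u,y). *)

Lemma fine_subeC (R : realType) (a b : \bar R) :
  fine (a - b)%E = - fine (b - a)%E.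
Proof.
by case: a => [a||]; case: b => [b||] //=; rewrite ?oppr0 // opprB.
Qed.

Section L2.
Variables (R : realType) (G : topologicalZmodType) (d : measure_display).
Variables (Y : measurableType d) (nu : {measure set borelG G -> \bar R}).
Variable (lam : {measure set Y -> \bar R}).

(* No integrability is needed: fine sends both infinite values to 0. *)
Lemma intGYN (h : G * Y -> R) :
  intGY nu lam (fun z => - h z) = - intGY nu lam h.
Proof.
rewrite /intGY.
have -> : (fun z : borelG G * Y => (- h z)%:E) = (fun z => - (h z)%:E)%E.
  by apply: funext => z; rewrite EFinN.
by rewrite /integral !patch_setT funeposN funenegN fine_subeC.
Qed.

Lemma ipL2C (f g : G * Y -> complex R) :
  ipL2 nu lam g f = conjc (ipL2 nu lam f g).
Proof.
rewrite /ipL2 /= -intGYN.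
have ReC : (fun z => complex.Re (g z * conjc (f z))) =
           (fun z => complex.Re (f z * conjc (g z))).
  by apply: funext => z; case: (f z) => a b; case: (g z) => c e /=; lra.
have ImC : (fun z => complex.Im (g z * conjc (f z))) =
           (fun z => - complex.Im (f z * conjc (g z))).
  by apply: funext => z; case: (f z) => a b; case: (g z) => c e /=; lra.
by rewrite ReC ImC.
Qed.

Section RKHS.
Variables (H : set (G * Y -> complex R)) (K : G -> Y -> (G * Y -> complex R)).
Hypothesis hH : is_RKHS_L2 nu lam H K.

Lemma RKHS_kernel_mem x y : H (K x y).
Proof. by have [_ [_ [_ [_ [HK _]]]]] := hH. Qed.

Lemma RKHS_reproducing f x y : H f -> f (x, y) = ipL2 nu lam f (K x y).
Proof. by have [_ [_ [_ [_ [_ Hrep]]]]] := hH; apply: Hrep. Qed.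

Lemma adjoint_kernel_eval (T Ts : (G * Y -> complex R) -> (G * Y -> complex R))
    (hT : bounded_op nu lam H T) (hTs : is_adjoint nu lam H T Ts) x y x' y' :
  Ts (K x' y') (x, y) = conjc (T (K x y) (x', y')).
Proof.
have [HTs adjT] := hTs; have [HT _ _] := hT.
have Kmem := RKHS_kernel_mem.
rewrite (RKHS_reproducing _ _ (HTs _ (Kmem _ _))) ipL2C -adjT //.
by rewrite -RKHS_reproducing //; apply/HT/Kmem.
Qed.

Hypothesis hK : forall (x u : G) (y v : Y), K x y (u, v) = K 0 y (u - x, v).

Lemma kernel_translate x y : K x y = rho x (K 0 y).
Proof. by apply: funext => -[u v]; rewrite hK. Qed.

Lemma commutant_kernel_eval (T : (G * Y -> complex R) -> (G * Y -> complex R))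
    (hT : in_commutant nu lam H T) x y u v :
  T (K x y) (u, v) = T (K 0 y) (u - x, v).
Proof.
have [_ commT] := hT.
by rewrite kernel_translate commT //; apply: RKHS_kernel_mem.
Qed.

End RKHS.
End L2.

Theorem corollary5p18 (R : realType) (G : topologicalZmodType)
    (hausG : hausdorff_space G) (lcG : locally_compact [set: G])
    (nu : {measure set borelG G -> \bar R}) (haar_nu : haar_measure nu)
    (d : measure_display) (Y : measurableType d) (lam : {measure set Y -> \bar R})
    (H : set (G * Y -> complex R)) (K : G -> Y -> (G * Y -> complex R))
    (hH : is_RKHS_L2 nu lam H K)
    (hK : forall (x u : G) (y v : Y), K x y (u, v) = K 0 y (u - x, v))
    (T Ts : (G * Y -> complex R) -> (G * Y -> complex R))
    (hT : in_commutant nu lam H T) (hTs : is_adjoint nu lam H T Ts)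
    (u : G) (v y : Y) :
  psi K Ts u v y = conjc (T (K 0 v) (- u, y)) /\
  conjc (T (K 0 v) (- u, y)) = conjc (psi K T (- u) y v).
Proof.
split; last by [].
rewrite /psi (adjoint_kernel_eval hH hT.1 hTs).
by rewrite (commutant_kernel_eval hH hK hT) sub0r.
Qed.
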